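(* For any $q=\Omega(1)$, any $\epsilon>0$, and any two parties $u$, $v$ holding input vectors $\mathbf{x}_u,\mathbf{x}_v\in\mathbb{R}^d$ respectively, there is a (randomized) quantization method in which $u$ sends $O(d\log q)$ bits to $v$, and if $\|\mathbf{x}_u-\mathbf{x}_v\|=O(q\epsilon)$, then $v$ can recover an unbiased estimate $\mathbf{z}$ of $\mathbf{x}_u$ (i.e. $\mathbb{E}[\mathbf{z}]=\mathbf{x}_u$) with $\|\mathbf{z}-\mathbf{x}_u\|=O(\epsilon)$.
   Context: $\|\cdot\|$ denotes a fixed one of the $\ell_1$, $\ell_2$ or $\ell_\infty$ norms on $\mathbb{R}^d$. Asymptotic notation hides absolute constants independent of $d,q,\epsilon$ and the inputs. Party $v$ uses its own vector $\mathbf{x}_v$ when decoding. *)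

From HB Require Import structures.
From mathcomp Require Import all_boot all_order all_algebra.
From mathcomp Require Import reals.
Set Implicit Arguments. Unset Strict Implicit. Unset Printing Implicit Defensive.
Import Order.TTheory GRing.Theory Num.Theory.
Local Open Scope ring_scope.

Inductive normkind := L1 | L2 | Linf.

Definition vnorm (R : realType) (nk : normkind) (d : nat) (x : 'rV[R]_d) : R :=
  match nk with
  | L1 => \sum_(i < d) `|x 0 i|
  | L2 => Num.sqrt (\sum_(i < d) (x 0 i) ^+ 2)
  | Linf => \big[Num.max/0]_(i < d) `|x 0 i|
  end.

Definition msg := seq bool.

Definition fdist (R : realType) := seq (R * msg).

Definition is_dist (R : realType) (D : fdist R) : Prop :=
  (forall p, p \in D -> 0 <= p.1) /\ \sum_(p <- D) p.1 = 1.

Definition in_support (R : realType) (D : fdist R) (m : msg) : Prop :=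
  exists2 p, p \in D & (0 < p.1) /\ p.2 = m.

Definition expect (R : realType) (d : nat) (D : fdist R) (f : msg -> 'rV[R]_d)
  : 'rV[R]_d := \sum_(p <- D) p.1 *: f p.2.

(* Scale by delta = eps / rho, where rho is d+1, sqrt(d+1) or 1 for the l1, l2 and
   l_infinity norms, and round every coordinate of x_u / delta independently up or
   down with the probabilities that make the resulting lattice point k unbiased.
   Each coordinate of delta * k is within delta of x_u, so ||delta * k - x_u|| <= eps.
   Party u sends every coordinate of k modulo 2^t, with 2^t of order q, together with
   a colour of the high parts k / 2^t, taken from a colouring of Z^d with 8^d colours
   in which points at l1-distance at most d get distinct colours; it exists because a
   greedy colouring of the torus (Z/(d+1))^d needs only as many colours as an
   l1-ball of radius d has points, at most 6^d.  When ||x_u - x_v|| <= q eps, k lies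
   within l1-distance O(dq) of x_v / delta; two such points with equal residues have
   high parts at l1-distance at most d, and equal colours then force them to
   coincide, so v recovers k exactly. *)

From HB Require Import structures.
From mathcomp Require Import all_boot all_order all_algebra.
From mathcomp Require Import reals.
From mathcomp Require Import zify ring lra.
From Stdlib Require Import ClassicalEpsilon.
Set Implicit Arguments. Unset Strict Implicit. Unset Printing Implicit Defensive.
Import Order.TTheory GRing.Theory Num.Theory.

Fixpoint bits (b n : nat) : seq bool :=
  if b is b'.+1 then odd n :: bits b' n./2 else [::].

Fixpoint unbits (s : seq bool) : nat :=
  if s is c :: s' then c + (unbits s').*2 else 0.

Lemma size_bits b n : size (bits b n) = b.
Proof. by elim: b n => //= b IH n; rewrite IH. Qed.

Lemma bitsK b n : n < 2 ^ b -> unbits (bits b n) = n.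
Proof.
elim: b n => [|b IH] n /=; first by rewrite expn0; case: n.
by move=> lt_n; rewrite IH ?odd_double_half // ltn_half_double -mul2n -expnS.
Qed.

Definition bit_blocks (t : nat) (ns : seq nat) : seq bool :=
  flatten [seq bits t n | n <- ns].

Lemma size_bit_blocks t ns : size (bit_blocks t ns) = t * size ns.
Proof.
rewrite /bit_blocks size_flatten /shape -map_comp.
by elim: ns => [|n ns IH] /=; rewrite ?muln0 // size_bits IH mulnS.
Qed.

Lemma bit_blocks_inj t ns ns' :
  size ns = size ns' -> all (fun n => n < 2 ^ t) ns -> all (fun n => n < 2 ^ t) ns' ->
  bit_blocks t ns = bit_blocks t ns' -> ns = ns'.
Proof.
move=> eq_size lt_ns lt_ns' eq_bb.
have shapeE (s : seq nat) : shape [seq bits t n | n <- s] = nseq (size s) t.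
  by elim: s => //= n s ->; rewrite size_bits.
have : [seq bits t n | n <- ns] = [seq bits t n | n <- ns'].
  by rewrite -[LHS]flattenK -[RHS]flattenK !shapeE eq_size; congr reshape.
move/(congr1 (map unbits)); rewrite -!map_comp !map_id_in // => n /=.
- by move/(allP lt_ns')/bitsK.
- by move/(allP lt_ns)/bitsK.
Qed.

(** * An l1-separating colouring of Z^d *)

Lemma greedy_coloring (T : finType) (e : rel T) (D : nat) :
  symmetric e -> (forall x, #|[set y | (y != x) && e x y]| <= D) ->
  exists f : T -> 'I_D.+1, forall x y, x != y -> e x y -> f x != f y.
Proof.
move=> e_sym deg_le.
suff [f f_ok] : exists f : T -> 'I_D.+1,
    {in enum T &, forall x y, x != y -> e x y -> f x != f y}.
  by exists f => x y; apply: f_ok; rewrite mem_enum.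
elim: (enum T) => [|a s [f f_ok]]; first by exists (fun=> ord0).
pose used := f @: [set y | (y != a) && e a y].
have used_nbr z : z != a -> e a z -> f z \in used.
  by move=> z_a az; apply: imset_f; rewrite inE z_a.
have [c _ c_free] : exists2 c, c \in [set: 'I_D.+1] & c \notin used.
  apply/subsetPn/negP => /subset_leq_card; rewrite cardsT card_ord.
  by move/leq_trans/(_ (leq_trans (leq_imset_card f _) (deg_le a))); rewrite ltnn.
exists (fun x => if x == a then c else f x) => x y; rewrite !inE.
case: (eqVneq x a) => [->|x_a]; case: (eqVneq y a) => [->|y_a] //=.
- by move=> _ _ _ ay; apply: contraNneq c_free => ->; apply: used_nbr.
- by move=> _ _ _ xa; apply: contraNneq c_free => <-; apply: used_nbr; rewrite // e_sym.
- exact: f_ok.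
Qed.

Lemma sum_tent_pow2 d : \sum_(n < d.*2.+1) 2 ^ (d - `|n - d|) + 2 = 3 * 2 ^ d.
Proof.
elim: d => [|d IH]; first by rewrite big_ord_recl big_ord0.
rewrite doubleS big_ord_recl big_ord_recr /=.
have -> : d.+1 - `|0 - d.+1| = 0 by lia.
rewrite (eq_bigr (fun i : 'I_d.*2.+1 => 2 * 2 ^ (d - `|i - d|))); last first.
  by move=> i _; rewrite /bump /= -expnS; congr (2 ^ _); have := ltn_ord i; lia.
rewrite -big_distrr /=.
have -> : d.+1 - `|d.*2.+2 - d.+1| = 0 by lia.
by move: IH; rewrite expnS expn0; set S := \sum_(i < _) _; lia.
Qed.

Lemma dist_mid_le d (n : 'I_d.*2.+1) : `|n - d| <= d.
Proof. by case: n => n /=; rewrite -mul2n; lia. Qed.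

(* [x] stands for the integer vector [(x i - d)_i], so [small_shifts d] is the
   l1-ball of radius [d] in Z^d. *)
Definition small_shifts d : {set {ffun 'I_d -> 'I_d.*2.+1}} :=
  [set x : {ffun 'I_d -> 'I_d.*2.+1} | \sum_i `|x i - d| <= d].

Lemma card_small_shifts d : #|small_shifts d| <= 6 ^ d.
Proof.
(* [W x = 2 ^ (d * d - |x|_1)] is at least [2 ^ (d * d - d)] on small shifts, while
   the total weight factors over the coordinates and is at most [(3 * 2 ^ d) ^ d]. *)
pose W (x : {ffun 'I_d -> 'I_d.*2.+1}) := \prod_i 2 ^ (d - `|x i - d|).
have W_small x : x \in small_shifts d -> 2 ^ (d * d) <= 2 ^ d * W x.
  rewrite inE => x_small.
  have -> : 2 ^ (d * d) = 2 ^ (\sum_i `|x i - d|) * W x.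
    rewrite expn_sum -big_split /= expnM -[d in _ ^ d]card_ord -prod_nat_const.
    by apply: eq_bigr => i _; rewrite -expnD subnKC ?dist_mid_le.
  by rewrite leq_mul2r leq_exp2l // x_small orbT.
have sumW : \sum_x W x <= (3 * 2 ^ d) ^ d.
  rewrite (_ : \sum_x W x = \prod_(i < d) \sum_(n < d.*2.+1) 2 ^ (d - `|n - d|)).
    rewrite -[d in _ ^ d]card_ord -prod_nat_const.
    by apply: leq_prod => i _; rewrite -sum_tent_pow2 leq_addr.
  by rewrite bigA_distr_bigA.
rewrite -(leq_pmul2r (expn_gt0 2 (d * d))) -sum_nat_const.
apply: (leq_trans (@leq_sum _ _ (mem (small_shifts d)) _ _ W_small)).
rewrite -big_distrr /= (leq_trans (leq_mul (leqnn _) (leq_trans _ sumW))) //.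
  by rewrite big_mkcond leq_sum // => x _; case: ifP.
by rewrite expnMn -expnM mulnA -expnMn.
Qed.

Definition l1dist d (h h' : 'I_d -> int) : nat := \sum_i `|h i - h' i|.

Lemma dist_le_l1dist d (h h' : 'I_d -> int) i : `|h i - h' i| <= l1dist h h'.
Proof. by rewrite /l1dist (bigD1 i) //= leq_addr. Qed.

Section TorusColoring.
Variable d : nat.

Definition ord_modz (z : int) : 'I_d.+1 := inord `|(z %% d.+1)%Z|.

Lemma ord_modzE z : (ord_modz z : int) = (z %% d.+1)%Z.
Proof.
have := @modz_ge0 z d.+1 isT; have := @ltz_pmod z d.+1 isT.
by rewrite /ord_modz inordK; lia.
Qed.

Lemma ord_modz_mod z : ord_modz (z %% d.+1)%Z = ord_modz z.
Proof. by rewrite /ord_modz modz_mod. Qed.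

Lemma ord_modz_small (u : 'I_d.+1) : ord_modz u = u.
Proof. by apply: val_inj; rewrite /= /ord_modz modz_small ?inord_val //; case: u => /= u; lia. Qed.

Definition torus_shift (u : {ffun 'I_d -> 'I_d.+1}) (x : {ffun 'I_d -> 'I_d.*2.+1}) :=
  [ffun i => ord_modz ((u i)%:Z + (x i)%:Z - d%:Z)%R].

Definition torus_adj : rel {ffun 'I_d -> 'I_d.+1} :=
  fun u w => [exists x in small_shifts d, w == torus_shift u x].

Lemma torus_adj_sym : symmetric torus_adj.
Proof.
suff adj_sym u w : torus_adj u w -> torus_adj w u by move=> u w; apply/idP/idP; apply: adj_sym.
case/existsP => x /andP[x_small /eqP ->]; apply/existsP.
exists [ffun i => rev_ord (x i)]; rewrite inE; apply/andP; split.
  move: x_small; rewrite inE; apply: leq_trans.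
  by apply/eq_leq/eq_bigr => i _; rewrite ffunE /=; case: (x i) => n /=; rewrite -mul2n; lia.
apply/eqP/ffunP => i; rewrite !ffunE /= -[LHS]ord_modz_small.
rewrite -ord_modz_mod -[RHS]ord_modz_mod ord_modzE.
rewrite -(addrA (_ %% _)%Z) modzDml !addrA; congr (ord_modz (_ %% _)%Z).
by case: (x i) => n /=; rewrite -mul2n; lia.
Qed.

Lemma torus_deg u : #|[set w | (w != u) && torus_adj u w]| <= #|small_shifts d|.-1.
Proof.
pose x0 : {ffun 'I_d -> 'I_d.*2.+1} := [ffun=> inord d].
have x0_mid i : x0 i = d :> nat by rewrite ffunE inordK // -mul2n; lia.
have u_nbr : u \in torus_shift u @: small_shifts d.
  apply/imsetP; exists x0.
    by rewrite inE (eq_bigr (fun=> 0)) ?big1 // => i _; rewrite x0_mid; lia.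
  by apply/ffunP => i; rewrite ffunE x0_mid addrK ord_modz_small.
have sub : [set w | (w != u) && torus_adj u w] \subset (torus_shift u @: small_shifts d) :\ u.
  apply/subsetP => w; rewrite !inE => /andP[-> /existsP[x /andP[x_small /eqP ->]]].
  exact: imset_f.
apply: leq_trans (subset_leq_card sub) _.
have := leq_imset_card (torus_shift u) (small_shifts d).
rewrite (cardsD1 u) u_nbr add1n => lt_card.
by rewrite -ltnS (leq_trans lt_card) ?leqSpred.
Qed.

Definition torus_proj (h : 'I_d -> int) := [ffun i => ord_modz (h i)].

Lemma torus_proj_adj h h' : l1dist h h' <= d -> torus_adj (torus_proj h) (torus_proj h').
Proof.
move=> close; apply/existsP.
have dist_le i : `|h i - h' i| <= d := leq_trans (dist_le_l1dist h h' i) close.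
exists [ffun i => inord `|(h' i - h i + d%:Z)%R|]; apply/andP; split.
  rewrite inE; apply: leq_trans close.
  apply/eq_leq/eq_bigr => i _; rewrite ffunE inordK; have := dist_le i; lia.
apply/eqP/ffunP => i; rewrite !ffunE inordK; last by have := dist_le i; lia.
rewrite -[LHS]ord_modz_mod -[RHS]ord_modz_mod ord_modzE -(addrA (_ %% _)%Z) modzDml.
congr (ord_modz (_ %% _)%Z).
by have := dist_le i; lia.
Qed.

Lemma torus_proj_inj h h' : torus_proj h = torus_proj h' -> l1dist h h' <= d -> h =1 h'.
Proof.
move=> eq_proj close i; apply/eqP; rewrite -subr_eq0 -absz_eq0.
have dvd_diff : (d.+1%:Z %| (h i - h' i)%R)%Z.
  rewrite -eqz_mod_dvd; apply/eqP.
  by move/ffunP/(_ i): eq_proj; rewrite !ffunE -!ord_modzE => ->.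
rewrite dvdzE /= in dvd_diff; apply: contraLR dvd_diff => ne0.
by rewrite gtnNdvd ?lt0n // ltnS (leq_trans (dist_le_l1dist _ _ i)).
Qed.

End TorusColoring.

Lemma exists_l1_coloring d : exists col : ('I_d -> int) -> nat,
  (forall h, col h < 2 ^ (3 * d)) /\
  (forall h h', col h = col h' -> l1dist h h' <= d -> h =1 h').
Proof.
have [f f_proper] := greedy_coloring (@torus_adj_sym d) (@torus_deg d).
have card_le : #|small_shifts d| <= 2 ^ (3 * d).
  apply: leq_trans (card_small_shifts d) _; rewrite expnM.
  by case: d {f f_proper} => // d; rewrite leq_exp2r.
exists (fun h => f (torus_proj h)); split.
  move=> h; apply: leq_trans (ltn_ord _) _.
  by case: #|_| card_le => [_|n //]; apply: expn_gt0.
move=> h h' eq_col close; apply: torus_proj_inj (close).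
apply/eqP/negPn/negP => ne.
by move: (f_proper _ _ ne (torus_proj_adj close)); rewrite (val_inj eq_col) eqxx.
Qed.

Section LatticeMessage.
Variables (d t : nat) (col : ('I_d -> int) -> nat).
Hypothesis col_lt : forall h, col h < 2 ^ (3 * d).
Hypothesis col_sep : forall h h', col h = col h' -> l1dist h h' <= d -> h =1 h'.

Definition message (k : 'I_d -> int) : msg :=
  bit_blocks t [seq `|(k i %% Posz (2 ^ t))%Z| | i <- enum 'I_d]
  ++ bits (3 * d) (col (fun i => (k i %/ Posz (2 ^ t))%Z)).

Lemma size_message k : size (message k) = t * d + 3 * d.
Proof. by rewrite size_cat size_bit_blocks size_map size_enum_ord size_bits. Qed.

Lemma message_inj k k' : message k = message k' -> l1dist k k' < d.+1 * 2 ^ t -> k =1 k'.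
Proof.
set M : int := Posz (2 ^ t); have M_gt0 : (0 < M)%R by rewrite ltz_nat expn_gt0.
have mod_ge0 (z : int) : (0 <= (z %% M)%Z)%R := modz_ge0 z (lt0r_neq0 M_gt0).
pose lo (h : 'I_d -> int) := [seq `|(h i %% M)%Z| | i <- enum 'I_d].
pose hi (h : 'I_d -> int) i := (h i %/ M)%Z.
have lo_lt h : all (fun n => n < 2 ^ t) (lo h).
  apply/allP => _ /mapP[i _ ->].
  by have := mod_ge0 (h i); have := ltz_pmod (h i) M_gt0; lia.
move=> /eqP; rewrite eqseq_cat ?size_bit_blocks ?size_map // => /andP[/eqP eq_lo /eqP eq_hi].
have {eq_lo} eq_mod i : (k i %% M)%Z = (k' i %% M)%Z.
  have : lo k = lo k' by apply: bit_blocks_inj eq_lo; rewrite ?size_map ?lo_lt.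
  move/eq_in_map/(_ i (mem_enum _ i)) => /=.
  by have := mod_ge0 (k i); have := mod_ge0 (k' i); lia.
have eq_col : col (hi k) = col (hi k') by rewrite -(bitsK (col_lt (hi k))) eq_hi bitsK.
have diffE i : (k i - k' i = (hi k i - hi k' i) * M)%R.
  by rewrite {1}(divz_eq (k i) M) {1}(divz_eq (k' i) M) eq_mod; ring.
move=> dist_lt; have dist_hi : l1dist (hi k) (hi k') <= d.
  rewrite -ltnS -(ltn_pmul2r (expn_gt0 2 t)); apply: leq_ltn_trans dist_lt.
  by rewrite /l1dist big_distrl; apply/eq_leq/eq_bigr => i _; rewrite diffE abszM absz_nat.
move=> i; rewrite (divz_eq (k i) M) (divz_eq (k' i) M) eq_mod.
by rewrite [(k i %/ M)%Z](col_sep eq_col dist_hi i).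
Qed.

End LatticeMessage.

(** * Randomized rounding *)

Local Open Scope ring_scope.

Lemma sum_prod_bool (R : comPzSemiRingType) d (G : 'I_d -> bool -> R) :
  \sum_(B : {ffun 'I_d -> bool}) \prod_i G i (B i) = \prod_i (G i true + G i false) :> R.
Proof.
symmetry; rewrite (eq_bigr (fun i => \sum_b G i b)) => [|i _]; last by rewrite big_bool.
exact: bigA_distr_bigA.
Qed.

Section Rounding.
Variables (R : realType) (d : nat).

Definition bernoulli_weight (p : 'I_d -> R) (B : {ffun 'I_d -> bool}) : R :=
  \prod_i (if B i then p i else 1 - p i).

Lemma bernoulli_weight_ge0 p B : (forall i, 0 <= p i <= 1) -> 0 <= bernoulli_weight p B.
Proof. by move=> p01; apply: prodr_ge0 => i _; have := p01 i; case: (B i); lra. Qed.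

Lemma sum_bernoulli_weight p : \sum_B bernoulli_weight p B = 1.
Proof.
by rewrite (sum_prod_bool (fun i b => if b then p i else 1 - p i)) big1 // => i _; rewrite subrKC.
Qed.

Lemma sum_bernoulli_weight_bit p j : \sum_B bernoulli_weight p B * (B j)%:R = p j.
Proof.
pose G i (b : bool) := (if b then p i else 1 - p i) * (if i == j then b%:R else 1).
transitivity (\sum_(B : {ffun 'I_d -> bool}) \prod_i G i (B i)).
  apply: eq_bigr => B _; rewrite big_split /=; congr (_ * _).
  by rewrite (bigD1 j) //= eqxx big1 ?mulr1 // => i /negbTE ->.
rewrite sum_prod_bool (bigD1 j) //= big1 => [|i /negbTE i_j]; rewrite /G ?i_j /=.
  by rewrite eqxx mulr1 mulr0 addr0 mulr1.
by rewrite !mulr1 subrKC.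
Qed.

Definition frac_part (y : 'rV[R]_d) (i : 'I_d) : R := y 0 i - (Num.floor (y 0 i))%:~R.

Lemma frac_part_itv y i : 0 <= frac_part y i < 1.
Proof. by have := floor_itv (y 0 i); rewrite /frac_part intrD; lra. Qed.

Definition round_with (y : 'rV[R]_d) (B : {ffun 'I_d -> bool}) (i : 'I_d) : int :=
  Num.floor (y 0 i) + B i.

Lemma round_withE y B i : (round_with y B i)%:~R = y 0 i - frac_part y i + (B i)%:R :> R.
Proof. by rewrite /frac_part intrD subKr. Qed.

Lemma round_with_dist y B i : `|(round_with y B i)%:~R - y 0 i| <= 1.
Proof.
by rewrite round_withE; have := frac_part_itv y i; case: (B i) => /=; rewrite ler_norml; lra.
Qed.

Lemma expect_round_with y :
  \sum_B bernoulli_weight (frac_part y) B *: \row_i (round_with y B i)%:~R = y.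
Proof.
apply/rowP => j; rewrite summxE.
under eq_bigr do rewrite !mxE round_withE mulrDr.
rewrite big_split /= sum_bernoulli_weight_bit -mulr_suml sum_bernoulli_weight.
by rewrite mul1r subrK.
Qed.

End Rounding.

Section Norms.
Variables (R : realType) (d : nat).

Lemma sum_abs_sqr_le (a : 'I_d -> R) : (\sum_i `|a i|) ^+ 2 <= d%:R * \sum_i a i ^+ 2.
Proof.
case: d a => [|n] a; first by rewrite !big_ord0 expr0n mul0r.
have amgm (u : R) : \sum_i 2 * u * `|a i| <= \sum_i (a i ^+ 2 + u ^+ 2).
  apply: ler_sum => i _; rewrite -real_normK ?num_real //.
  by have := sqr_ge0 (`|a i| - u); nra.
have key (X S u : R) : u * n.+1%:R = X -> 2 * u * X <= S + u ^+ 2 *+ n.+1 ->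
    X ^+ 2 <= n.+1%:R * S.
  by have := ltr0Sn R n; rewrite -mulr_natl => ? <-; nra.
apply: (key _ _ _ (divfK _ _)); first by rewrite pnatr_eq0.
by move: (amgm ((\sum_i `|a i|) / n.+1%:R)); rewrite -mulr_sumr big_split /= sumr_const card_ord.
Qed.

Definition norm_scale (nk : normkind) : R :=
  match nk with L1 => d.+1%:R | L2 => Num.sqrt d.+1%:R | Linf => 1 end.

Lemma norm_scale_gt0 nk : 0 < norm_scale nk.
Proof. by case: nk; rewrite /= ?sqrtr_gt0 ?ltr0Sn ?ltr01. Qed.

Definition coord_step nk (eps : R) : R := eps / norm_scale nk.

Lemma coord_step_gt0 nk eps : 0 < eps -> 0 < coord_step nk eps.
Proof. by move=> eps_gt0; rewrite divr_gt0 ?norm_scale_gt0. Qed.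

Lemma vnorm_le_coord nk (v : 'rV[R]_d) (c : R) : 0 <= c ->
  (forall i, `|v 0 i| <= coord_step nk c) -> vnorm nk v <= c.
Proof.
rewrite /coord_step => c0; case: nk => /= v_le.
- apply: le_trans (ler_sum _ (fun i _ => v_le i)) _.
  rewrite sumr_const card_ord -[_ *+ d]mulr_natl mulrA ler_pdivrMr ?ltr0Sn // -natr1.
  by have := ler0n R d; nra.
- have sq_le i : v 0 i ^+ 2 <= (c / Num.sqrt d.+1%:R) ^+ 2.
    rewrite -real_normK ?num_real // ler_sqr ?nnegrE ?v_le //.
    by rewrite divr_ge0 ?sqrtr_ge0.
  rewrite -(ger0_norm c0) -sqrtr_sqr ler_wsqrtr //.
  apply: le_trans (ler_sum _ (fun i _ => sq_le i)) _.
  rewrite sumr_const card_ord exprMn exprVn sqr_sqrtr ?ler0n // -[_ *+ d]mulr_natl mulrA.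
  by rewrite ler_pdivrMr ?ltr0Sn // -natr1; have := ler0n R d; have := sqr_ge0 c; nra.
- by apply: bigmax_le => // i _; rewrite -[c]divr1 v_le.
Qed.

Lemma norm_scale_sum_le nk (v : 'rV[R]_d) :
  norm_scale nk * \sum_i `|v 0 i| <= d.+1%:R * vnorm nk v.
Proof.
case: nk => /=.
- by [].
- set X := \sum_i `|v 0 i|; set S := \sum_i v 0 i ^+ 2.
  have X_ge0 : 0 <= X by apply: sumr_ge0.
  have le_X : X <= Num.sqrt d.+1%:R * Num.sqrt S.
    rewrite -sqrtrM ?ler0n // -(ger0_norm X_ge0) -sqrtr_sqr ler_wsqrtr //.
    apply: le_trans (sum_abs_sqr_le _) _; rewrite ler_wpM2r ?ler_nat //.
    by apply: sumr_ge0 => i _; apply: sqr_ge0.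
  rewrite -{2}(sqr_sqrtr (ler0n R d.+1)).
  by have := sqrtr_ge0 (d.+1%:R : R); nra.
- rewrite mul1r; set M := \big[Num.max/0]_i `|v 0 i|.
  have le_M i : `|v 0 i| <= M by apply: le_bigmax.
  apply: le_trans (ler_sum _ (fun i _ => le_M i)) _.
  by rewrite sumr_const card_ord -[_ *+ d]mulr_natl ler_wpM2r ?ler_nat ?bigmax_ge_id.
Qed.

Lemma sum_abs_le_coord_step nk (v : 'rV[R]_d) (c eps : R) : 0 < eps ->
  vnorm nk v <= c * eps -> \sum_i `|v 0 i| / coord_step nk eps <= d.+1%:R * c.
Proof.
move=> eps_gt0 le_v; rewrite -mulr_suml invf_div mulrA ler_pdivrMr // mulrC.
apply: le_trans (norm_scale_sum_le nk v) _.
by rewrite -mulrA ler_wpM2l ?ler0n.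
Qed.

End Norms.

(** * The quantization scheme *)

Section Scheme.
Variables (R : realType) (d t : nat) (col : ('I_d -> int) -> nat).
Hypothesis col_lt : forall h, (col h < 2 ^ (3 * d))%N.
Hypothesis col_sep : forall h h', col h = col h' -> (l1dist h h' <= d)%N -> h =1 h'.
Variables (delta r : R).
Hypothesis delta_gt0 : 0 < delta.
Hypothesis r_small : 2 * r < (d.+1 * 2 ^ t)%:R.

Definition l1_to (k : 'I_d -> int) (y : 'rV[R]_d) : R := \sum_i `|(k i)%:~R - y 0 i|.

Lemma l1dist_le_l1_to k k' y : (l1dist k k')%:R <= l1_to k y + l1_to k' y.
Proof.
rewrite /l1dist /l1_to natr_sum -big_split /=; apply: ler_sum => i _.
by rewrite natr_absz intr_norm rmorphB /= [X in _ <= _ + X]distrC ler_distD.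
Qed.

Definition decode_lattice (m : msg) (y : 'rV[R]_d) : 'I_d -> int :=
  epsilon (inhabits (fun=> 0%Z)) (fun k => message t col k = m /\ l1_to k y <= r).

Lemma decode_latticeE k y : l1_to k y <= r -> decode_lattice (message t col k) y =1 k.
Proof.
rewrite /decode_lattice; set P := fun k' => _ /\ _ => k_near.
have [] := epsilon_spec (inhabits (fun=> 0%Z)) P (ex_intro _ k (conj erefl k_near)).
move: (epsilon _ P) => k' eq_msg k'_near.
apply: (message_inj col_lt col_sep eq_msg).
rewrite -(ltr_nat R); apply: le_lt_trans (l1dist_le_l1_to _ _ y) _.
by have := r_small; move: ((d.+1 * 2 ^ t)%:R : R) => N; lra.
Qed.

Definition encode (x : 'rV[R]_d) : fdist R :=
  [seq (bernoulli_weight (frac_part (delta^-1 *: x)) B,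
        message t col (round_with (delta^-1 *: x) B)) | B <- enum {ffun 'I_d -> bool}].

Definition decode (m : msg) (xv : 'rV[R]_d) : 'rV[R]_d :=
  delta *: \row_i (decode_lattice m (delta^-1 *: xv) i)%:~R.

Lemma encode_is_dist x : is_dist (encode x).
Proof.
split; last by rewrite big_map big_enum sum_bernoulli_weight.
move=> _ /mapP[B _ ->]; apply: bernoulli_weight_ge0 => i.
by have := frac_part_itv (delta^-1 *: x) i; lra.
Qed.

Lemma size_encode x m : in_support (encode x) m -> size m = (t * d + 3 * d)%N.
Proof. by case=> _ /mapP[B _ ->] [_ <-]; rewrite size_message. Qed.

Section Decoding.
Variables xu xv : 'rV[R]_d.
Hypothesis xv_near : d%:R + \sum_i `|(xu - xv) 0 i| / delta <= r.

Lemma decode_round B :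
  decode (message t col (round_with (delta^-1 *: xu) B)) xv =
  delta *: \row_i (round_with (delta^-1 *: xu) B i)%:~R.
Proof.
congr (_ *: _); apply/rowP => i; rewrite !mxE decode_latticeE //.
apply: le_trans xv_near; rewrite /l1_to.
apply: le_trans (_ : \sum_i (1 + `|(xu - xv) 0 i| / delta) <= _); last first.
  by rewrite big_split /= sumr_const card_ord.
apply: ler_sum => j _; set y := delta^-1 *: xu.
apply: le_trans (ler_distD (y 0 j) _ _) _; apply: lerD; first exact: round_with_dist.
by rewrite !mxE -mulrBr normrM gtr0_norm ?invr_gt0 // mulrC.
Qed.

Lemma expect_decode : expect (encode xu) (fun m => decode m xv) = xu.
Proof.
rewrite /expect big_map big_enum /=.
under eq_bigr do rewrite decode_round scalerA mulrC -scalerA.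
by rewrite -scaler_sumr expect_round_with scalerA mulfV ?gt_eqF // scale1r.
Qed.

Lemma decode_error m : in_support (encode xu) m -> forall i, `|(decode m xv - xu) 0 i| <= delta.
Proof.
case=> _ /mapP[B _ ->] [_ <-] i /=; rewrite decode_round !mxE.
set y := delta^-1 *: xu.
have -> : xu 0 i = delta * y 0 i by rewrite /y mxE mulrA mulfV ?gt_eqF // mul1r.
rewrite -mulrBr normrM gtr0_norm // -[X in _ <= X]mulr1 ler_wpM2l ?(ltW delta_gt0) //.
exact: round_with_dist.
Qed.

End Decoding.
End Scheme.

Theorem theorem1 (R : realType) (nk : normkind) :
  exists (q0 c1 : nat) (c2 c3 : R), 0 < c2 /\ 0 < c3 /\
  forall (q : nat) (eps : R) (d : nat), (q0 <= q)%N -> 0 < eps ->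
  exists (enc : 'rV[R]_d -> fdist R) (dec : msg -> 'rV[R]_d -> 'rV[R]_d),
  forall xu xv : 'rV[R]_d,
    is_dist (enc xu) /\
    (forall m, in_support (enc xu) m -> (size m <= c1 * d * trunc_log 2 q)%N) /\
    (vnorm nk (xu - xv) <= c2 * q%:R * eps ->
       expect (enc xu) (fun m => dec m xv) = xu /\
       (forall m, in_support (enc xu) m -> vnorm nk (dec m xv - xu) <= c3 * eps)).
Proof.
exists 2%N, 6%N, 1, 1; do 2!split=> //; move=> q eps d q_ge2 eps_gt0.
have [col [col_lt col_sep]] := exists_l1_coloring d.
pose t := (trunc_log 2 q).+2; pose delta := coord_step d nk eps.
(* Rounding moves x_u / delta by at most [d] in l1, and x_v / delta is within
   [d.+1 * q] of x_u / delta. *)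
pose r : R := (d + d.+1 * q)%:R.
have r_small : 2 * r < (d.+1 * 2 ^ t)%:R.
  rewrite -natrM ltr_nat /t expnS; have := trunc_log_ltn q (isT : (1 < 2)%N); nia.
have delta_gt0 : 0 < delta by apply: coord_step_gt0.
exists (encode t col delta), (decode t col delta r) => xu xv.
split; first exact: encode_is_dist.
split.
  move=> m /size_encode ->; have : (0 < trunc_log 2 q)%N by rewrite trunc_log_gt0.
  by rewrite /t; nia.
rewrite !mul1r => xv_near.
have near : d%:R + \sum_i `|(xu - xv) 0 i| / delta <= r.
  by rewrite /r natrD natrM lerD2l sum_abs_le_coord_step.
split; first exact: (expect_decode col_lt col_sep delta_gt0 r_small near).
move=> m /(decode_error col_lt col_sep delta_gt0 r_small near) coord_le.
exact: vnorm_le_coord (ltW eps_gt0) coord_le.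
Qed.
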